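(* Let $T=(L,R,\tau,\sigma)$ be a rewrite rule and $m:L\to G$ a matching with respect to $T$. Let $(\mathcal{H},\tau_1,\delta)$ be a pushout of $\tau$ and $|m|$ in the category of sets ($\tau_1:|G|\to\mathcal{H}$, $\delta:|R|\to\mathcal{H}$, $\delta\circ\tau=\tau_1\circ|m|$), let $\Gamma=|G|-|m(L)|$, $\Sigma=\mathrm{dom}(\sigma)$, $\Delta=|R|-\Sigma$, and let $\sigma_1:\mathcal{H}\rightharpoonup|G|$ be the unique partial function with domain $\delta(\Sigma)$ such that $|m|\circ\sigma=\sigma_1\circ\delta$ on $\Sigma$. Let $H$ be the graph with set of nodes $\mathcal{H}$ determined by requiring that $\tau_1$ is strictly graphic on $\Gamma$, that $\delta$ is strictly graphic on $\Delta$, and that each node $n_1\in\delta(\Sigma)$ is a $\tau_1$-clone of $\sigma_1(n_1)$. Then $\delta$ underlies a graph morphism $d:R\to H$, and $(H,\tau_1,d,\sigma_1)$ is a cloning pushout of $T$ and $m$, i.e. an initial object of the category of cloning cones over $T$ and $m$.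
   Context: A signature $\Omega$ assigns an arity to each symbol; for a function $f$, $f^*$ acts letterwise on strings. A termgraph (graph) $G$ has node set $|G|$, a subset of labeled nodes, a labeling $\mathcal{L}_G$ of labeled nodes by symbols of $\Omega$ and a successor function $\mathcal{S}_G$ giving each labeled node a string of nodes of length the arity of its label. A graph morphism $g:G\to H$ is a function $|G|\to|H|$ sending labeled nodes to labeled nodes with $\mathcal{L}_H(g(n))=\mathcal{L}_G(n)$ and $\mathcal{S}_H(g(n))=g^*(\mathcal{S}_G(n))$ for each labeled $n$; $|g|$ is its underlying function. A function $\gamma:|G|\to|H|$ is graphic at a node $n$ if $n$ is unlabeled or both $n,\gamma(n)$ are labeled with $\mathcal{L}_H(\gamma(n))=\mathcal{L}_G(n)$, $\mathcal{S}_H(\gamma(n))=\gamma^*(\mathcal{S}_G(n))$; strictly graphic at $n$ if both $n,\gamma(n)$ are unlabeled or both are labeled with these equalities; (strictly) graphic on a set if so at each node of it. For $\tau:|G|\to|H|$, a node $p\in|H|$ is a $\tau$-clone of $q\in|G|$ if $p$ is labeled iff $q$ is, and then $\mathcal{L}_H(p)=\mathcal{L}_G(q)$ and $\mathcal{S}_H(p)=\tau^*(\mathcal{S}_G(q))$. A rewrite rule is $(L,R,\tau,\sigma)$ with $L,R$ graphs, $\tau:|L|\to|R|$ a function, $\sigma:|R|\rightharpoonup|L|$ a partial function such that each $n\in\mathrm{dom}(\sigma)$ is unlabeled or a $\tau$-clone of $\sigma(n)$. A morphism of rewrite rules $(L,R,\tau,\sigma)\to(L_1,R_1,\tau_1,\sigma_1)$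 is a pair of graph morphisms $m:L\to L_1$, $d:R\to R_1$ with $|d|\circ\tau=\tau_1\circ|m|$, $d(\mathrm{dom}(\sigma))\subseteq\mathrm{dom}(\sigma_1)$ and $|m|\circ\sigma=\sigma_1\circ|d|$ on $\mathrm{dom}(\sigma)$. A matching with respect to $T=(L,R,\tau,\sigma)$ is a graph morphism $m:L\to G$ such that whenever $m(p)=m(p')$ for distinct $p,p'\in|L|$, then $\tau(p),\tau(p')\in\mathrm{dom}(\sigma)$ and $\sigma(\tau(p))=\sigma(\tau(p'))$. A cloning cone over $T$ and $m:L\to G$ is a tuple $(H,\tau_1,d,\sigma_1)$ with $H$ a graph, $\tau_1:|G|\to|H|$ a function, $d:R\to H$ a graph morphism, $\sigma_1:|H|\rightharpoonup|G|$ a partial function, such that $(G,H,\tau_1,\sigma_1)$ is a rewrite rule, $(m,d)$ is a morphism of rewrite rules from $T$ to $(G,H,\tau_1,\sigma_1)$, $\tau_1$ is graphic on $|G|-|m(L)|$, and every $n_1\in\mathrm{dom}(\sigma_1)$ is a $\tau_1$-clone of $\sigma_1(n_1)$. A morphism of cloning cones $(H,\tau_1,d,\sigma_1)\to(H',\tau_1',d',\sigma_1')$ is a graph morphism $h:H\to H'$ with $|h|\circ\tau_1=\tau_1'$, $h\circ d=d'$, $h(\mathrm{dom}(\sigma_1))\subseteq\mathrm{dom}(\sigma_1')$ and $\sigma_1'\circ|h|=\sigma_1$ on $\mathrm{dom}(\sigma_1)$; this defines the category of cloning cones over $T$ and $m$. *)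

From Stdlib Require Import List.
Import ListNotations.


Record signature := Signature { sym : Type ; arity : sym -> nat }.

(* A termgraph: node set, and for each node either None (unlabeled) or
   Some (label, successor string) with the string of length the arity. *)
Record graph (S : signature) := Graph {
  node : Type ;
  lab : node -> option (sym S * list node) ;
  lab_ok : forall n f s, lab n = Some (f, s) -> length s = arity S f
}.
Arguments node {S} g.
Arguments lab {S} g _.
Arguments lab_ok {S} g _ _ _ _.

Section Defs.
Context {S : signature}.

Definition relab {A B : Type} (gamma : A -> B)
  (o : option (sym S * list A)) : option (sym S * list B) :=
  match o with
  | None => None
  | Some (f, s) => Some (f, map gamma s)
  end.

Definition labeled {G : graph S} (n : node G) : Prop := lab G n <> None.

Definition graphic_at {G H : graph S} (gamma : node G -> node H) (n : node G) : Prop :=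
  lab G n = None \/ lab H (gamma n) = relab gamma (lab G n).

Definition strictly_graphic_at {G H : graph S} (gamma : node G -> node H)
  (n : node G) : Prop :=
  lab H (gamma n) = relab gamma (lab G n).

Definition clone {G H : graph S} (tau : node G -> node H)
  (p : node H) (q : node G) : Prop :=
  lab H p = relab tau (lab G q).

Definition is_graph_morphism {G H : graph S} (g : node G -> node H) : Prop :=
  forall n, graphic_at g n.

Definition is_rewrite_rule {L R : graph S} (tau : node L -> node R)
  (sigma : node R -> option (node L)) : Prop :=
  forall n q, sigma n = Some q -> lab R n = None \/ clone tau n q.

Definition is_rule_morphism {L R : graph S} (tau : node L -> node R)
  (sigma : node R -> option (node L))
  {L1 R1 : graph S} (tau1 : node L1 -> node R1)
  (sigma1 : node R1 -> option (node L1))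
  (m : node L -> node L1) (d : node R -> node R1) : Prop :=
  is_graph_morphism m /\ is_graph_morphism d /\
  (forall p, d (tau p) = tau1 (m p)) /\
  (* d(dom sigma) ⊆ dom sigma1 and m ∘ sigma = sigma1 ∘ d on dom sigma *)
  (forall n q, sigma n = Some q -> sigma1 (d n) = Some (m q)).

Definition is_matching {L R : graph S} (tau : node L -> node R)
  (sigma : node R -> option (node L)) {G : graph S} (m : node L -> node G) : Prop :=
  is_graph_morphism m /\
  forall p p', p <> p' -> m p = m p' ->
    exists q, sigma (tau p) = Some q /\ sigma (tau p') = Some q.

Definition is_cloning_cone {L R : graph S} (tau : node L -> node R)
  (sigma : node R -> option (node L)) {G : graph S} (m : node L -> node G)
  {H : graph S} (tau1 : node G -> node H) (d : node R -> node H)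
  (sigma1 : node H -> option (node G)) : Prop :=
  is_rewrite_rule tau1 sigma1 /\
  is_rule_morphism tau sigma tau1 sigma1 m d /\
  (forall n, ~ (exists p, m p = n) -> graphic_at tau1 n) /\
  (forall n1 q, sigma1 n1 = Some q -> clone tau1 n1 q).

Definition is_cone_morphism {G : graph S} {R : graph S}
  {H : graph S} (tau1 : node G -> node H) (d : node R -> node H)
  (sigma1 : node H -> option (node G))
  {H' : graph S} (tau1' : node G -> node H') (d' : node R -> node H')
  (sigma1' : node H' -> option (node G)) (h : node H -> node H') : Prop :=
  is_graph_morphism h /\
  (forall n, h (tau1 n) = tau1' n) /\
  (forall r, h (d r) = d' r) /\
  (forall n q, sigma1 n = Some q -> sigma1' (h n) = Some q).

Definition is_cloning_pushout {L R : graph S} (tau : node L -> node R)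
  (sigma : node R -> option (node L)) {G : graph S} (m : node L -> node G)
  {H : graph S} (tau1 : node G -> node H) (d : node R -> node H)
  (sigma1 : node H -> option (node G)) : Prop :=
  is_cloning_cone tau sigma m tau1 d sigma1 /\
  forall (H' : graph S) (tau1' : node G -> node H') (d' : node R -> node H')
         (sigma1' : node H' -> option (node G)),
    is_cloning_cone tau sigma m tau1' d' sigma1' ->
    (exists h, is_cone_morphism tau1 d sigma1 tau1' d' sigma1' h) /\
    (forall h h', is_cone_morphism tau1 d sigma1 tau1' d' sigma1' h ->
                  is_cone_morphism tau1 d sigma1 tau1' d' sigma1' h' ->
                  forall n, h n = h' n).

Definition is_set_pushout {A B C X : Type} (tau : A -> B) (mu : A -> C)
  (tau1 : C -> X) (delta : B -> X) : Prop :=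
  (forall a, delta (tau a) = tau1 (mu a)) /\
  forall (Y : Type) (f : C -> Y) (g : B -> Y),
    (forall a, g (tau a) = f (mu a)) ->
    (exists u : X -> Y, (forall c, u (tau1 c) = f c) /\ (forall b, u (delta b) = g b)) /\
    (forall u u' : X -> Y,
       (forall c, u (tau1 c) = f c) -> (forall b, u (delta b) = g b) ->
       (forall c, u' (tau1 c) = f c) -> (forall b, u' (delta b) = g b) ->
       forall x, u x = u' x).

End Defs.

From Stdlib Require Import List Classical PropExtensionality.

(* A pushout of sets is jointly surjective, so every node of H is of the form
   tau1 c or delta r.  Each clause defining H says that such a node is a clone,
   under tau1 or delta, of a node of G or R; in a competing cloning cone the
   image of that node is again a clone of the same node (or is reached by a map
   graphic there), so the mediating function given by the set pushout is
   graphic everywhere, and it respects sigma1 because dom sigma1 = delta(dom sigma).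
   Only the graph-morphism part of the matching condition on m is needed: the
   identification condition is what makes sigma1 well defined, and sigma1 is
   given here together with its defining equation. *)

Section Relabeling.
Context {S : signature}.

Lemma relab_comp {A B C : Type} (f : A -> B) (g : B -> C) (h : A -> C)
  (o : option (sym S * list A)) :
  (forall x, g (f x) = h x) -> relab g (relab f o) = relab h o.
Proof.
  intro E. destruct o as [[a s]|]; simpl; auto.
  rewrite map_map. f_equal. f_equal. apply map_ext, E.
Qed.

Lemma clone_graphic_at {G H H' : graph S} (g : node G -> node H)
  (g' : node G -> node H') (u : node H -> node H') (p : node H) (q : node G) :
  (forall x, u (g x) = g' x) -> clone g p q ->
  lab G q = None \/ clone g' (u p) q -> graphic_at u p.
Proof.
  unfold clone, graphic_at. intros E Hp [Nq | Hu].
  - left. rewrite Hp, Nq. reflexivity.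
  - right. rewrite Hu, Hp. symmetry. apply relab_comp, E.
Qed.

Lemma square_graphic_at {L R G H : graph S} (tau : node L -> node R)
  (m : node L -> node G) (tau1 : node G -> node H) (delta : node R -> node H)
  (r : node R) (q : node L) :
  (forall p, delta (tau p) = tau1 (m p)) -> graphic_at m q ->
  lab R r = None \/ clone tau r q -> clone tau1 (delta r) (m q) ->
  graphic_at delta r.
Proof.
  unfold graphic_at, clone. intros E [Nq | Hmq] [Nr | Hr] Hd;
    [left; exact Nr | left; rewrite Hr, Nq; reflexivity | left; exact Nr |].
  right. rewrite Hd, Hmq, Hr.
  transitivity (relab (fun p => tau1 (m p)) (lab L q)).
  - apply relab_comp. reflexivity.
  - symmetry. apply relab_comp, E.
Qed.

End Relabeling.

Lemma set_pushout_jointly_surjective {A B C X : Type} (tau : A -> B) (mu : A -> C)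
  (tau1 : C -> X) (delta : B -> X) :
  is_set_pushout tau mu tau1 delta ->
  forall x, (exists c, tau1 c = x) \/ (exists b, delta b = x).
Proof.
  intros [_ Huniv] x.
  destruct (Huniv Prop (fun _ => True) (fun _ => True) (fun _ => eq_refl))
    as [_ Huniq].
  (* both the constant [True] and the image predicate mediate into [Prop] *)
  rewrite (Huniq (fun x => (exists c, tau1 c = x) \/ (exists b, delta b = x))
                 (fun _ => True)); auto.
  - intro c. apply propositional_extensionality. split; auto. intros _. left; eauto.
  - intro b. apply propositional_extensionality. split; auto. intros _. right; eauto.
Qed.

Section ClonePushout.
Context {S : signature} {L R G H : graph S}
  {tau : node L -> node R} {sigma : node R -> option (node L)}
  {m : node L -> node G} {tau1 : node G -> node H} {delta : node R -> node H}
  {sigma1 : node H -> option (node G)}.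

Hypothesis HT : is_rewrite_rule tau sigma.
Hypothesis Hmg : is_graph_morphism m.
Hypothesis Hcomm : forall p, delta (tau p) = tau1 (m p).
Hypothesis Hsig1 : forall r q, sigma r = Some q -> sigma1 (delta r) = Some (m q).
Hypothesis HGamma : forall n, ~ (exists p, m p = n) -> strictly_graphic_at tau1 n.
Hypothesis HDelta : forall r, sigma r = None -> strictly_graphic_at delta r.
Hypothesis HSigma : forall n1 q, sigma1 n1 = Some q -> clone tau1 n1 q.

Lemma delta_graph_morphism : is_graph_morphism delta.
Proof.
  intro r. destruct (sigma r) as [q|] eqn:Eq.
  - apply (square_graphic_at tau m tau1 delta r q Hcomm (Hmg q) (HT _ _ Eq)).
    exact (HSigma _ _ (Hsig1 _ _ Eq)).
  - right. exact (HDelta _ Eq).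
Qed.

Lemma delta_cloning_cone : is_cloning_cone tau sigma m tau1 delta sigma1.
Proof.
  repeat split.
  - intros n q E. right. exact (HSigma _ _ E).
  - exact Hmg.
  - exact delta_graph_morphism.
  - exact Hcomm.
  - exact Hsig1.
  - intros n Nn. right. exact (HGamma _ Nn).
  - exact HSigma.
Qed.

Section Mediator.
Context {H' : graph S} {tau1' : node G -> node H'} {d' : node R -> node H'}
  {sigma1' : node H' -> option (node G)}.

Hypothesis Hcone' : is_cloning_cone tau sigma m tau1' d' sigma1'.
Hypothesis Hcover : forall x, (exists c, tau1 c = x) \/ (exists b, delta b = x).
Hypothesis Hdom1 :
  forall n1 q, sigma1 n1 = Some q -> exists r, sigma r <> None /\ delta r = n1.

Variable u : node H -> node H'.
Hypothesis Hu1 : forall c, u (tau1 c) = tau1' c.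
Hypothesis Hu2 : forall r, u (delta r) = d' r.

Lemma mediator_graphic_at_delta (r : node R) : graphic_at u (delta r).
Proof.
  destruct Hcone' as (_ & (_ & Hd' & _ & Hs') & _ & HC').
  destruct (sigma r) as [q|] eqn:Eq.
  - apply (clone_graphic_at tau1 tau1' u (delta r) (m q) Hu1).
    + exact (HSigma _ _ (Hsig1 _ _ Eq)).
    + right. rewrite Hu2. exact (HC' _ _ (Hs' _ _ Eq)).
  - apply (clone_graphic_at delta d' u (delta r) r Hu2).
    + exact (HDelta _ Eq).
    + rewrite Hu2. exact (Hd' r).
Qed.

Lemma mediator_graph_morphism : is_graph_morphism u.
Proof.
  intro x. destruct (Hcover x) as [[c <-] | [r <-]];
    [| apply mediator_graphic_at_delta].
  destruct (classic (exists p, m p = c)) as [[p <-] | Nc].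
  - rewrite <- Hcomm. apply mediator_graphic_at_delta.
  - destruct Hcone' as (_ & _ & HG' & _).
    apply (clone_graphic_at tau1 tau1' u (tau1 c) c Hu1).
    + exact (HGamma _ Nc).
    + rewrite Hu1. exact (HG' _ Nc).
Qed.

Lemma mediator_cone_morphism :
  is_cone_morphism tau1 delta sigma1 tau1' d' sigma1' u.
Proof.
  split; [exact mediator_graph_morphism | split; [exact Hu1 | split; [exact Hu2 |]]].
  intros x q Ex. destruct Hcone' as (_ & (_ & _ & _ & Hs') & _).
  destruct (Hdom1 _ _ Ex) as [r [Nr <-]].
  destruct (sigma r) as [q'|] eqn:Eq; [| congruence].
  rewrite (Hsig1 _ _ Eq) in Ex. injection Ex as <-.
  rewrite Hu2. exact (Hs' _ _ Eq).
Qed.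

End Mediator.
End ClonePushout.

Theorem theorem1 (S : signature) (L R G : graph S)
  (tau : node L -> node R) (sigma : node R -> option (node L))
  (m : node L -> node G)
  (HT : is_rewrite_rule tau sigma)
  (Hm : is_matching tau sigma m)
  (H : graph S) (tau1 : node G -> node H) (delta : node R -> node H)
  (Hpo : is_set_pushout tau m tau1 delta)
  (sigma1 : node H -> option (node G))
  (Hdom1 : forall n1, (exists q, sigma1 n1 = Some q) <->
                      (exists r, sigma r <> None /\ delta r = n1))
  (Hsig1 : forall r q, sigma r = Some q -> sigma1 (delta r) = Some (m q))
  (HGamma : forall n, ~ (exists p, m p = n) -> strictly_graphic_at tau1 n)
  (HDelta : forall r, sigma r = None -> strictly_graphic_at delta r)
  (HSigma : forall n1 q, sigma1 n1 = Some q -> clone tau1 n1 q) :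
  is_graph_morphism delta /\
  is_cloning_pushout tau sigma m tau1 delta sigma1.
Proof.
  pose proof (set_pushout_jointly_surjective tau m tau1 delta Hpo) as Hcover.
  destruct Hpo as [Hcomm Huniv]. destruct Hm as [Hmg _].
  assert (Hdom : forall n1 q, sigma1 n1 = Some q ->
                   exists r, sigma r <> None /\ delta r = n1)
    by (intros n1 q E; apply Hdom1; exists q; exact E).
  split; [exact (delta_graph_morphism HT Hmg Hcomm Hsig1 HDelta HSigma) |].
  split; [exact (delta_cloning_cone HT Hmg Hcomm Hsig1 HGamma HDelta HSigma) |].
  intros H' tau1' d' sigma1' Hcone'.
  pose proof Hcone' as (_ & (_ & _ & Hc' & _) & _).
  destruct (Huniv _ tau1' d' Hc') as [[u [Hu1 Hu2]] Huniq].
  split.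
  - exists u.
    exact (mediator_cone_morphism Hcomm Hsig1 HGamma HDelta HSigma
             Hcone' Hcover Hdom u Hu1 Hu2).
  - intros h h' (_ & Hh1 & Hh2 & _) (_ & Hh1' & Hh2' & _).
    exact (Huniq h h' Hh1 Hh2 Hh1' Hh2').
Qed.
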